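(* There is an absolute constant $C>0$ such that the following holds. Let $G$ be a finite graph with $n$ vertices, and let $\epsilon>0$ satisfy $\epsilon n < n-1$. If $G$ is $\epsilon$-distance-uniform with critical distance $d$, then \[ d \le 2^{C\,\frac{\log n}{\log \epsilon^{-1}}}. \] (In the paper's notation: $d = 2^{O\left(\frac{\log n}{\log \epsilon^{-1}}\right)}$.)
   Context: For a parameter $\epsilon>0$, an $n$-vertex graph $G$ is called $\epsilon$-distance-uniform if there is a value $d$, called the critical distance, such that for every vertex $v$, all but at most $\epsilon n$ of the other vertices are at graph distance exactly $d$ from $v$. The ratio $\frac{\log n}{\log \epsilon^{-1}}$ does not depend on the base of the logarithm. *)

From mathcomp Require Import all_boot.
From Stdlib Require Import Reals.

Set Implicit Arguments.
Unset Strict Implicit.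
Unset Printing Implicit Defensive.

(* A finite simple graph is a symmetric irreflexive relation e on a finType T. *)

Fixpoint walk_set (T : finType) (e : rel T) (u : T) (k : nat) : {set T} :=
  match k with
  | 0 => [set u]
  | k'.+1 => [set y | [exists x in walk_set e u k', e x y]]
  end.

Definition dist_eq (T : finType) (e : rel T) (u v : T) (d : nat) : bool :=
  (v \in walk_set e u d) && [forall k : 'I_d, v \notin walk_set e u k].

Definition distance_uniform (T : finType) (e : rel T) (eps : R) (d : nat) : Prop :=
  forall v : T,
    (INR #|[set w | (w != v) && ~~ dist_eq e v w d]| <= eps * INR #|T|)%R.

(* Let s <= eps n bound the number of vertices off the critical sphere of any
   vertex.  If v is fixed and r < R/2 <= d/2, averaging over the sphere of radius d
   around v gives a z on it at distance d from all but a (s+1)/(n-1-s) fraction of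
   the ball B(v,R); the ball of radius r around the point of a shortest v-z walk at
   distance R - r from v lies in B(v,R) and is closer than d to z, so it is smaller
   than B(v,R) by that factor.  Iterating along the radii 2^j - 1 gives
   (n-1-s)^k <= n (s+1)^k for 2^k <= d + 1, hence log d = O(log n / log (1/eps))
   when eps < 1/16, while for larger eps the trivial bound d < n suffices. *)

From mathcomp Require Import all_boot zify.

Set Implicit Arguments.
Unset Strict Implicit.
Unset Printing Implicit Defensive.

Lemma card_sep_sum (T : finType) (A : {set T}) (P : pred T) :
  #|[set x in A | P x]| = \sum_(x in A) P x.
Proof.
rewrite -sum1_card big_mkcond [RHS]big_mkcond /=.
by apply: eq_bigr => x _; rewrite inE; case: (x \in A); case: (P x).
Qed.

Lemma double_count (T U : finType) (A : {set T}) (B : {set U}) (r : T -> U -> bool) :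
  \sum_(x in A) #|[set y in B | r x y]| = \sum_(y in B) #|[set x in A | r x y]|.
Proof.
under eq_bigr do rewrite card_sep_sum.
by rewrite exchange_big; apply: eq_bigr => y _; rewrite card_sep_sum.
Qed.

Lemma exists_le_average (T : finType) (A : {set T}) (F : T -> nat) :
  A != set0 -> exists2 x, x \in A & #|A| * F x <= \sum_(y in A) F y.
Proof.
case/set0Pn => x0 x0A; have [x xA x_min] := arg_minnP F x0A.
by exists x => //; rewrite -sum_nat_const leq_sum.
Qed.

Section Walks.
Variables (T : finType) (e : rel T).
Hypothesis e_sym : symmetric e.
Notation W := (walk_set e).

Lemma walk_setS u k x : (x \in W u k.+1) = [exists y in W u k, e y x].
Proof. by rewrite /= inE. Qed.

Lemma walk_set_cat u a x b y : x \in W u a -> y \in W x b -> y \in W u (a + b).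
Proof.
move=> xW; elim: b y => [|b IH] y; first by rewrite inE addn0 => /eqP->.
rewrite addnS !walk_setS => /existsP[z /andP[zW e_zy]].
by apply/existsP; exists z; rewrite IH.
Qed.

Lemma walk_set_split u a b y :
  y \in W u (a + b) -> exists2 x, x \in W u a & y \in W x b.
Proof.
elim: b y => [|b IH] y; first by rewrite addn0 => yW; exists y; rewrite ?inE.
rewrite addnS walk_setS => /existsP[z /andP[/IH[x xW zW] e_zy]].
by exists x => //; rewrite walk_setS; apply/existsP; exists z; rewrite zW.
Qed.

Lemma walk_set_sym u k y : y \in W u k -> u \in W y k.
Proof.
elim: k y => [|k IH] y; first by rewrite !inE eq_sym.
rewrite walk_setS => /existsP[z /andP[/IH zW e_zy]].
have yz : z \in W y 1 by rewrite walk_setS; apply/existsP; exists y; rewrite inE eqxx e_sym.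
by rewrite -add1n; apply: walk_set_cat yz zW.
Qed.

Definition sphere u k : {set T} := [set x | dist_eq e u x k].

Definition off_sphere u k : {set T} := [set x | (x != u) && ~~ dist_eq e u x k].

Definition ball u k : {set T} := [set x | [exists j : 'I_k.+1, x \in W u j]].

Lemma ballP u k x : reflect (exists2 j, j <= k & x \in W u j) (x \in ball u k).
Proof.
rewrite inE; apply: (iffP existsP) => [[j xW]|[j j_le xW]].
  by exists j; rewrite -1?ltnS.
by exists (Ordinal (j_le : j < k.+1)).
Qed.

Lemma ball_center u k : u \in ball u k.
Proof. by apply/ballP; exists 0; rewrite ?inE. Qed.

Lemma walk_set_sub_ball u k x : x \in W u k -> x \in ball u k.
Proof. by move=> xW; apply/ballP; exists k. Qed.

Lemma subset_ball u j k : j <= k -> ball u j \subset ball u k.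
Proof.
move=> le_jk; apply/subsetP => x /ballP[i le_ij xW].
by apply/ballP; exists i; first exact: leq_trans le_jk.
Qed.

Lemma ball_trans u a x b y : x \in ball u a -> y \in ball x b -> y \in ball u (a + b).
Proof.
move=> /ballP[i le_ia xW] /ballP[j le_jb yW].
by apply/ballP; exists (i + j); [exact: leq_add | exact: walk_set_cat xW yW].
Qed.

Lemma ball_sym u k y : y \in ball u k -> u \in ball y k.
Proof. by move=> /ballP[j le_jk yW]; apply/ballP; exists j; last exact: walk_set_sym. Qed.

Lemma ball_not_dist_eq u x k d : x \in ball u k -> k < d -> ~~ dist_eq e u x d.
Proof.
move=> /ballP[j le_jk xW] lt_kd; rewrite negb_and negb_forall; apply/orP; right.
by apply/existsP; exists (Ordinal (leq_ltn_trans le_jk lt_kd)); rewrite negbK.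
Qed.

Lemma ball_proper v w d j : dist_eq e v w d -> j < d -> ball v j \proper ball v j.+1.
Proof.
move=> /andP[wW w_far] lt_jd; rewrite properE subset_ball //=.
move: wW; rewrite -(subnKC lt_jd) => /walk_set_split[q qW wW].
apply/subsetPn; exists q; first exact: walk_set_sub_ball.
apply: contraL (w_far) => q_near; rewrite negb_forall; apply/existsP.
have /ballP[i le_i wW'] := ball_trans q_near (walk_set_sub_ball wW).
have lt_id : i < d by lia.
by exists (Ordinal lt_id); rewrite negbK.
Qed.

Lemma dist_eq_lt_card v w d : dist_eq e v w d -> d < #|T|.
Proof.
move=> vw; apply: leq_trans (max_card (ball v d)).
suff: forall j, j <= d -> j < #|ball v j| by apply.
elim=> [|j IH] le_jd; first by apply/card_gt0P; exists v; exact: ball_center.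
exact: leq_ltn_trans (IH (ltnW le_jd)) (proper_card (ball_proper vw le_jd)).
Qed.

End Walks.

Section CriticalDistance.
Variables (T : finType) (e : rel T) (d s : nat).
Hypothesis e_sym : symmetric e.
Hypothesis card_off_sphere_le : forall x, #|off_sphere e x d| <= s.
Hypothesis card_gt : s.+1 < #|T|.

Lemma card_setC_sphere x : #|~: sphere e x d| <= s.+1.
Proof.
apply: leq_trans (_ : #|x |: off_sphere e x d| <= _).
  apply/subset_leq_card/subsetP => y; rewrite !inE.
  by case: eqVneq => //= yx ->.
by have := card_off_sphere_le x; rewrite cardsU1; case: (_ \notin _) => /=; lia.
Qed.

Lemma card_sphere_ge v : #|T| - s.+1 <= #|sphere e v d|.
Proof. by rewrite [X in _ <= X]cardsCs leq_sub2l ?card_setC_sphere. Qed.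

Lemma sphere_neq0 v : sphere e v d != set0.
Proof. by rewrite -card_gt0; apply: leq_trans (card_sphere_ge v); rewrite subn_gt0. Qed.

Lemma critical_lt_card : d < #|T|.
Proof.
have [v _] : exists v, v \in [set: T] by apply/set0Pn; rewrite -card_gt0 cardsT; lia.
have /set0Pn[w] := sphere_neq0 v; rewrite inE; exact: dist_eq_lt_card.
Qed.

Lemma ball_growth v r R : r.*2 < R -> R <= d ->
  exists p, #|ball e p r| * (#|T| - s.+1) <= #|ball e v R| * s.+1.
Proof.
move=> lt_rR le_Rd; pose near z := [set x in ball e v R | z \notin sphere e x d].
have [z zS z_avg] := exists_le_average (fun z => #|near z|) (sphere_neq0 v).
have sum_near : \sum_(z in sphere e v d) #|near z| <= #|ball e v R| * s.+1.
  rewrite double_count -sum_nat_const leq_sum // => x _.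
  apply: leq_trans (card_setC_sphere x); apply/subset_leq_card/subsetP => y.
  by rewrite !inE => /andP[].
move: zS; rewrite inE => /andP[]; rewrite -(subnKC (_ : R - r <= d)); last lia.
move=> /walk_set_split[p pW zW] _; exists p.
have near_ball : ball e p r \subset near z.
  apply/subsetP => x x_near; rewrite inE; apply/andP; split.
    by rewrite -(subnK (_ : r <= R)) ?(ball_trans (walk_set_sub_ball pW)) //; lia.
  rewrite inE; apply: (ball_not_dist_eq (k := r + (d - (R - r)))); last lia.
  exact: ball_trans (ball_sym e_sym x_near) (walk_set_sub_ball zW).
apply: leq_trans (leq_mul (subset_leq_card near_ball) (card_sphere_ge v)) _.
by rewrite mulnC; apply: leq_trans z_avg sum_near.
Qed.

Lemma card_ball_pow_ge k v : 2 ^ k <= d.+1 ->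
  (#|T| - s.+1) ^ k <= #|ball e v (2 ^ k).-1| * s.+1 ^ k.
Proof.
elim: k v => [|k IH] v le_d.
  by rewrite muln1 card_gt0; apply/set0Pn; exists v; exact: ball_center.
have exp_gt0 := expn_gt0 2 k.
have lt_rR : ((2 ^ k).-1).*2 < (2 ^ k.+1).-1 by rewrite expnS; lia.
have le_Rd : (2 ^ k.+1).-1 <= d by rewrite expnS in le_d *; lia.
have [p grow] := ball_growth v lt_rR le_Rd.
rewrite [(_ - _) ^ _]expnSr; apply: leq_trans (leq_mul (IH p _) (leqnn _)) _.
  by rewrite expnS in le_d; lia.
by rewrite mulnAC [s.+1 ^ k.+1]expnS mulnA leq_mul.
Qed.

Lemma critical_pow_le k : 2 ^ k <= d.+1 -> (#|T| - s.+1) ^ k <= #|T| * s.+1 ^ k.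
Proof.
have [v _] : exists v, v \in [set: T] by apply/set0Pn; rewrite -card_gt0 cardsT; lia.
move=> /(card_ball_pow_ge v) /leq_trans; apply; exact/leq_mul/leqnn/max_card.
Qed.

Lemma critical_distance_eq1 : s = 0 -> d = 1.
Proof.
move=> s0; have far v w : w != v -> dist_eq e v w d.
  move=> wv; apply: contraT => w_near.
  have := card_off_sphere_le v; rewrite s0 leqn0 cards_eq0 => /eqP off0.
  by have := in_set0 w; rewrite -off0 inE wv w_near.
have /card_gt1P[w [v [_ _ wv]]] : 1 < #|T| by lia.
have vw_far := far v w wv.
case: (ltngtP d 1) => [lt_d1 | gt_d1 | //].
  by move: vw_far; rewrite (_ : d = 0); [rewrite /dist_eq inE (negbTE wv) | lia].
have /properP[_ [q q1 q0]] := ball_proper vw_far (ltnW gt_d1).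
have qv : q != v by apply: contraNneq q0 => ->; exact: ball_center.
by have := ball_not_dist_eq q1 gt_d1; rewrite far.
Qed.

End CriticalDistance.

(* Imported only now: Reals rebinds the nat_scope notation [^] to Nat.pow. *)
From Stdlib Require Import Reals Lra.

Section CriticalExponent.
Local Open Scope R_scope.

Lemma ln_le x y : 0 < x -> x <= y -> ln x <= ln y.
Proof. by move=> x_gt0 [/(ln_increasing _ _ x_gt0) /Rlt_le | ->] //; exact: Rle_refl. Qed.

Variables (n eps : R).
Hypotheses (n_ge0 : 0 <= n) (eps_gt0 : 0 < eps) (eps_n_lt : eps * n < n - 1).

Lemma critical_size_gt1 : 1 < n.
Proof. nra. Qed.

Let inv_eps_gt1 : 1 < / eps.
Proof. rewrite -Rinv_1; apply: Rinv_lt_contravar; nra. Qed.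

Let ln_n_gt0 : 0 < ln n.
Proof. by rewrite -ln_1; apply: ln_increasing; [lra | exact: critical_size_gt1]. Qed.

Let ln_inv_eps_gt0 : 0 < ln (/ eps).
Proof. by rewrite -ln_1; apply: ln_increasing; lra. Qed.

Lemma critical_exponent_ge0 : 0 <= ln n / ln (/ eps).
Proof. by apply: Rlt_le; apply: Rdiv_lt_0_compat. Qed.

Lemma one_le_Rpower_critical : 1 <= Rpower 2 (4 * (ln n / ln (/ eps))).
Proof.
rewrite -(Rpower_O 2); last lra.
apply: Rle_Rpower; first lra.
have := critical_exponent_ge0; lra.
Qed.

Lemma critical_exponent_ge1 : 1 <= eps * n -> 1 <= ln n / ln (/ eps).
Proof.
move=> eps_n_ge1.
have : ln (/ eps) <= ln n.
  apply: ln_le; first lra.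
  apply: (Rmult_le_reg_l eps) => //; rewrite Rinv_r; lra.
move=> le_ln; apply: (Rmult_le_reg_r (ln (/ eps))) => //.
rewrite /Rdiv Rmult_assoc Rinv_l; lra.
Qed.

Lemma Rpower_inv_critical : Rpower (/ eps) (ln n / ln (/ eps)) = n.
Proof. by rewrite /Rpower Rmult_assoc Rinv_l ?Rmult_1_r ?exp_ln //; have := critical_size_gt1; lra. Qed.

(* 2 ^ (4 L) = 16 ^ L >= (1 / eps) ^ L = n for L = ln n / ln (1 / eps). *)
Lemma n_le_Rpower_large_eps : / 16 <= eps -> n <= Rpower 2 (4 * (ln n / ln (/ eps))).
Proof.
move=> eps_ge.
have pow_2_4 : Rpower 2 4 = 16.
  by rewrite (_ : 4 = INR 4) ?Rpower_pow /=; [ring | lra | rewrite /=; ring].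
rewrite -Rpower_mult pow_2_4.
rewrite -{1}Rpower_inv_critical; apply: Rle_Rpower_l; first exact: critical_exponent_ge0.
split; first lra.
rewrite -(Rinv_inv 16); apply: Rinv_le_contravar; lra.
Qed.

Lemma le_critical_exponent_small_eps (s : R) (k : nat) : eps < / 16 -> 1 <= s <= eps * n ->
  (n - 1 - s) ^ k <= n * (s + 1) ^ k -> INR k <= 2 * (ln n / ln (/ eps)).
Proof.
move=> eps_lt [s_ge1 s_le] growth.
have q_gt0 : 0 < / (4 * eps) by apply: Rinv_0_lt_compat; lra.
have q_pow_le : (/ (4 * eps)) ^ k <= n.
  have m_gt0 : 0 < (2 * eps * n) ^ k by apply: pow_lt; nra.
  have : (2 * eps * n * / (4 * eps)) ^ k <= n * (2 * eps * n) ^ k.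
    apply: (Rle_trans _ ((n - 1 - s) ^ k)).
      apply: pow_incr; split; [apply: Rlt_le |]; field_simplify; nra.
    apply: (Rle_trans _ _ _ growth); apply: Rmult_le_compat_l; first lra.
    by apply: pow_incr; lra.
  rewrite Rpow_mult_distr => le_m; apply: (Rmult_le_reg_l _ _ _ m_gt0); lra.
have k_ln_q : INR k * ln (/ (4 * eps)) <= ln n.
  by rewrite -ln_pow //; apply: ln_le => //; apply: pow_lt.
have ln_q : ln (/ eps) <= 2 * ln (/ (4 * eps)).
  have ln_inv4 : ln (/ 4) = - ln 4 by apply: ln_Rinv; lra.
  rewrite Rinv_mult ln_mult ?ln_inv4; try (apply: Rinv_0_lt_compat; lra).
  have : ln 16 <= ln (/ eps).
    apply: ln_le; first lra.
    rewrite -(Rinv_inv 16); apply: Rinv_le_contravar; lra.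
  by rewrite (_ : 16 = 4 * 4) ?ln_mult; lra.
apply: (Rmult_le_reg_r _ _ _ ln_inv_eps_gt0).
rewrite Rmult_assoc /Rdiv Rmult_assoc Rinv_l; last lra.
have := pos_INR k; nra.
Qed.

Lemma critical_distance_le_Rpower (s d : R) (k : nat) :
  1 <= s <= eps * n -> d < n -> (n - 1 - s) ^ k <= n * (s + 1) ^ k ->
  d + 1 <= 2 ^ S k -> d <= Rpower 2 (4 * (ln n / ln (/ eps))).
Proof.
move=> s_bounds d_lt growth d_le.
have [eps_small | eps_large] := Rlt_le_dec eps (/ 16).
- have k_le := le_critical_exponent_small_eps eps_small s_bounds growth.
  have L_ge1 : 1 <= ln n / ln (/ eps) by apply: critical_exponent_ge1; lra.
  apply: (Rle_trans _ (2 ^ S k)); first lra.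
  rewrite -Rpower_pow; last lra.
  by apply: Rle_Rpower; rewrite ?S_INR; lra.
- by have := n_le_Rpower_large_eps eps_large; lra.
Qed.

End CriticalExponent.

Lemma INR_expn m k : INR (expn m k) = pow (INR m) k.
Proof. by elim: k => [|k IH]; rewrite ?expnS ?mult_INR ?IH. Qed.

Theorem theorem1 :
  exists C : R, (0 < C)%R /\
    forall (T : finType) (e : rel T), symmetric e -> irreflexive e ->
    forall (eps : R) (d : nat),
      (0 < eps)%R ->
      (eps * INR #|T| < INR #|T| - 1)%R ->
      distance_uniform e eps d ->
      (INR d <= Rpower 2 (C * (ln (INR #|T|) / ln (/ eps))))%R.
Proof.
exists 4%R; split; first lra.
(* Loops do not shorten walks. *)
move=> T e e_sym _ eps d eps_gt0 eps_n_lt unif.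
set n := #|T| in eps_n_lt *.
have n_gt1 := critical_size_gt1 (pos_INR n) eps_gt0 eps_n_lt.
have card_gt0 : 0 < n by apply/ltP/INR_lt => /=; lra.
have [x0 max_x0] := eq_bigmax (fun x => #|off_sphere e x d|) card_gt0.
set s := \max_x _ in max_x0.
have s_le : (INR s <= eps * INR n)%R by rewrite max_x0; exact: unif.
have s_max x : #|off_sphere e x d| <= s by exact: leq_bigmax.
have lt_n : s.+1 < n by apply/ltP/INR_lt; rewrite S_INR; lra.
(* Without exceptional vertices eps can be arbitrarily small: only d = 1 helps. *)
have [s0 | s_gt0] := posnP s.
  rewrite (critical_distance_eq1 s_max lt_n s0).
  exact: one_le_Rpower_critical (pos_INR _) eps_gt0 eps_n_lt.
have k_lo := trunc_logP (isT : 1 < 2) (ltn0Sn d).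
have k_hi := trunc_log_ltn d.+1 (isT : 1 < 2).
move: (trunc_log 2 d.+1) k_lo k_hi => k k_lo k_hi.
apply: (critical_distance_le_Rpower (pos_INR _) eps_gt0 eps_n_lt (s := INR s) (k := k)).
- by split; [apply: (le_INR 1); apply/leP | ].
- by apply: lt_INR; apply/ltP; exact: critical_lt_card s_max lt_n.
- have -> : (INR n - 1 - INR s = INR (n - s.+1))%R.
    by rewrite minus_INR ?S_INR; [ring | apply/leP; exact: ltnW].
  rewrite -S_INR -!INR_expn -mult_INR multE; apply/le_INR/leP.
  exact: (critical_pow_le e_sym s_max lt_n k_lo).
- by rewrite -S_INR -[2%R]/(INR 2) -INR_expn; apply/le_INR/leP/ltnW.
Qed.
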